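(* For any preference profile with $n$ men and $n$ women, any stable matching contains at most one hell-couple.
   Context: Each of $n$ men strictly ranks the $n$ women by a bijection to $\{1,\dots,n\}$ (1 = favorite, $n$ = least favorite), and each woman strictly ranks the $n$ men likewise. A matching is a perfect pairing of men with women. A matching is stable if there is no man $M$ and woman $W$, not matched to each other, such that $M$ prefers $W$ to his partner and $W$ prefers $M$ to her partner. A hell-pair is a man and a woman who rank each other $n$ (last); a hell-couple in a matching is a hell-pair who are matched to each other. *)

From mathcomp Require Import all_boot all_fingroup.
Set Implicit Arguments. Unset Strict Implicit. Unset Printing Implicit Defensive.

(* A ranking is a bijection
   'I_n -> 'I_n ({perm 'I_n}); the value k : 'I_n stands for the rank k+1,
   so rank 1 (favourite) is 0 and rank n (least favourite) is n.-1. *)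

Record profile (n : nat) := Profile {
  mrank : 'I_n -> {perm 'I_n};
  wrank : 'I_n -> {perm 'I_n}
}.

Definition matching (n : nat) := {perm 'I_n}.

Definition mprefers n (P : profile n) (m w w' : 'I_n) : bool :=
  (nat_of_ord (mrank P m w) < nat_of_ord (mrank P m w'))%N.
Definition wprefers n (P : profile n) (w m m' : 'I_n) : bool :=
  (nat_of_ord (wrank P w m) < nat_of_ord (wrank P w m'))%N.

Definition blocking_pair n (P : profile n) (mu : matching n) (m w : 'I_n) : bool :=
  [&& mu m != w, mprefers P m w (mu m) & wprefers P w m ((mu^-1)%g w)].

Definition stable n (P : profile n) (mu : matching n) : Prop :=
  forall m w : 'I_n, ~~ blocking_pair P mu m w.

Definition hell_pair n (P : profile n) (m w : 'I_n) : bool :=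
  (nat_of_ord (mrank P m w) == n.-1) && (nat_of_ord (wrank P w m) == n.-1).

Definition hell_couple n (P : profile n) (mu : matching n) (m : 'I_n) : bool :=
  hell_pair P m (mu m).

From mathcomp Require Import all_boot all_fingroup.

(* Two distinct hell-couples (m1, w1) and (m2, w2) would make (m1, w2) a
   blocking pair: m1 ranks his own partner w1 last, and w2 ranks her own
   partner m2 last, so each strictly prefers the other. *)

Lemma perm_lt_last n (s : {perm 'I_n}) (a b : 'I_n) :
  nat_of_ord (s b) = n.-1 -> a != b -> (nat_of_ord (s a) < nat_of_ord (s b))%N.
Proof.
move=> sb_last neq_ab.
have : s a != s b by rewrite (inj_eq perm_inj).
rewrite -val_eqE /= ltn_neqAle => -> /=.
by rewrite sb_last -ltnS (leq_trans (ltn_ord (s a))) ?leqSpred.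
Qed.

Lemma mprefers_to_last n (P : profile n) (m w w' : 'I_n) :
  nat_of_ord (mrank P m w') = n.-1 -> w != w' -> mprefers P m w w'.
Proof. exact: perm_lt_last. Qed.

Lemma wprefers_to_last n (P : profile n) (w m m' : 'I_n) :
  nat_of_ord (wrank P w m') = n.-1 -> m != m' -> wprefers P w m m'.
Proof. exact: perm_lt_last. Qed.

Lemma hell_couples_block n (P : profile n) (mu : matching n) (m1 m2 : 'I_n) :
  hell_couple P mu m1 -> hell_couple P mu m2 -> m1 != m2 ->
  blocking_pair P mu m1 (mu m2).
Proof.
move=> /andP [/eqP m1_last _] /andP [_ /eqP w2_last] neq_m12.
have neq_w12 : mu m1 != mu m2 by rewrite (inj_eq perm_inj).
rewrite /blocking_pair neq_w12 permK /=.
by rewrite mprefers_to_last ?wprefers_to_last // eq_sym.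
Qed.

Theorem mainTheorem6 (n : nat) (P : profile n) (mu : matching n) :
  stable P mu -> (#|[set m : 'I_n | hell_couple P mu m]| <= 1)%N.
Proof.
move=> mu_stable; rewrite leqNgt; apply/card_gt1P => -[m1 [m2 [hell1 hell2 neq_m12]]].
rewrite !inE in hell1 hell2.
by have /negP := mu_stable m1 (mu m2); apply; apply: hell_couples_block.
Qed.
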